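(* Fix a constant $c>0$. There is a constant $\varepsilon>0$ (depending only on $c$) such that for every sufficiently large $n$ and every $c$-Ramsey graph $G$ with $n$ vertices, every treelike resolution refutation of $\Psi'_G$ has at least $n^{\varepsilon\log n}$ clauses; i.e. $\Psi'_G$ requires treelike resolution refutations of size $n^{\Omega(\log n)}$.
   Context: Logarithms are base 2. A graph $G$ on $n$ vertices is $c$-Ramsey if no set of $c\log n$ vertices is a clique or an independent set (assume $c\log n$ is an integer). A resolution refutation of a CNF is a sequence of clauses, each a clause of the formula or derived from earlier clauses $A\lor x$, $B\lor\neg x$ as $A\lor B$, ending in the empty clause; it is treelike if each derived clause is used as a premise at most once. The ''unary encoding'' $\Psi'_G$ has variables $p^i_v$ for $i\in[c\log n]$ and $v\in V(G)$ (meaning index $i$ is mapped to vertex $v$) and a variable $y$, with clauses: for each $i$, $\bigvee_{v}p^i_v$, and $\neg p^i_u\lor\neg p^i_v$ for distinct $u,v$ (each index maps to exactly one vertex); for each vertex $v$ and distinct $i,j$, $\neg p^i_v\lor\neg p^j_v$ (injectivity); for distinct $u,v$ with $\{u,v\}\in E(G)$ and distinct $i,j$, $y\lor\neg p^i_u\lor\neg p^j_v$; for distinct $u,v$ with $\{u,v\}\notin E(G)$ and distinct $i,j$, $\neg y\lor\neg p^i_u\lor\neg p^j_v$. Thus $\Psi'_G$ is satisfiable iff $G$ has a clique or independent set of size $c\log n$. *)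

From Stdlib Require Import Reals.
From mathcomp Require Import all_boot.

Set Implicit Arguments.
Unset Strict Implicit.
Unset Printing Implicit Defensive.

Definition log2R (x : R) : R := Rdiv (ln x) (ln (INR 2)).

(* A simple graph is a symmetric irreflexive relation e : rel 'I_n. *)
Definition is_clique n (e : rel 'I_n) (S : {set 'I_n}) : Prop :=
  forall u v, u \in S -> v \in S -> u != v -> e u v.

Definition is_indep n (e : rel 'I_n) (S : {set 'I_n}) : Prop :=
  forall u v, u \in S -> v \in S -> u != v -> ~~ e u v.

(* G is c-Ramsey, with k = c log n: no k-set is a clique or independent set. *)
Definition ramsey n (e : rel 'I_n) (k : nat) : Prop :=
  forall S : {set 'I_n}, #|S| = k -> ~ is_clique e S /\ ~ is_indep e S.

(* A literal is (x, b): b = true means the positive literal x,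
   b = false the negative literal ~x.  A clause is a finite set of literals. *)
Definition lit (V : finType) := (V * bool)%type.
Definition clause (V : finType) := {set lit V}.
Definition cnf (V : finType) := clause V -> Prop.

(* Justification of a line of a resolution derivation:
   [FromF]          : the line is a clause of the formula;
   [Resolved i j x] : the line is derived from the earlier lines i (which
                      contains x) and j (which contains ~x) as their resolvent. *)
Inductive just (V : finType) : Type :=
| FromF
| Resolved (i j : nat) (x : V).

Definition derivation (V : finType) := seq (clause V * just V).

Definition resolvent (V : finType) (A B : clause V) (x : V) : clause V :=
  (A :\ (x, true)) :|: (B :\ (x, false)).

Definition line_clause (V : finType) (P : derivation V) (t : nat) : clause V :=
  (nth (set0, FromF V) P t).1.

Definition valid_line (V : finType) (F : cnf V) (P : derivation V) (t : nat) : Prop :=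
  match (nth (set0, FromF V) P t).2 with
  | FromF => F (line_clause P t)
  | Resolved i j x =>
      [/\ i < t, j < t,
          (x, true) \in line_clause P i,
          (x, false) \in line_clause P j &
          line_clause P t = resolvent (line_clause P i) (line_clause P j) x]
  end.

Definition uses (V : finType) (P : derivation V) (s : nat) : nat :=
  \sum_(t < size P)
     match (nth (set0, FromF V) P t).2 with
     | FromF => 0
     | Resolved i j _ => (i == s) + (j == s)
     end.

Definition is_derived (V : finType) (P : derivation V) (s : nat) : bool :=
  if (nth (set0, FromF V) P s).2 is Resolved _ _ _ then true else false.

Definition refutation (V : finType) (F : cnf V) (P : derivation V) : Prop :=
  [/\ 0 < size P,
      (forall t, t < size P -> valid_line F P t) &
      line_clause P (size P).-1 = set0].

Definition treelike_refutation (V : finType) (F : cnf V) (P : derivation V) : Prop :=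
  refutation F P /\
  (forall s, s < size P -> is_derived P s -> uses P s <= 1).

(* Variables: [Some (i, v)] is p^i_v (index i in [k] mapped to vertex v),
   [None] is the variable y. *)
Definition pvar (k n : nat) := option ('I_k * 'I_n).

Definition Psi' (n k : nat) (e : rel 'I_n) : cnf (pvar k n) :=
  fun C =>
    (exists i : 'I_k, C = [set (Some (i, v), true) | v : 'I_n])
 \/ (exists (i : 'I_k) (u v : 'I_n), u != v /\
       C = [set (Some (i, u), false); (Some (i, v), false)])
 \/ (exists (v : 'I_n) (i j : 'I_k), i != j /\
       C = [set (Some (i, v), false); (Some (j, v), false)])
 \/ (exists (u v : 'I_n) (i j : 'I_k), [/\ u != v, e u v & i != j] /\
       C = [set (None, true); (Some (i, u), false); (Some (j, v), false)])
 \/ (exists (u v : 'I_n) (i j : 'I_k), [/\ u != v, ~~ e u v & i != j] /\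
       C = [set (None, false); (Some (i, u), false); (Some (j, v), false)]).

From Stdlib Require Import Reals Lra.
From mathcomp Require Import all_boot.
From mathcomp Require Import zify.

Set Implicit Arguments.
Unset Strict Implicit.
Unset Printing Implicit Defensive.

(* A prover-delayer argument.  Fix tau and score a partial assignment a by
   the number of tau-homogeneous vertex sets X consistent with a: the true
   p-variables of a form a partial matching of indices into X, a variable
   p^i_v with v in X is set false only once i or v is matched, and y is not
   set against tau.  The empty assignment scores the number of
   tau-homogeneous sets, an assignment falsifying an axiom of Psi'_G scores
   at most 1, and fixing one more variable splits the score subadditively;
   following falsified clauses from the empty clause up a treelike
   refutation therefore shows that it has at least that many leaves.
   In a graph on n >= 4^j vertices the number of cliques times the number of
   independent sets is at least 2^(j^2): deleting a vertex loses at least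
   the product on its larger neighbourhood, which holds half of the
   remaining vertices.  So one of them is at least 2^(j^2/2) = n^Omega(log n). *)

Section PartialAssignment.
Variable V : finType.

Definition falsifies (a : V -> option bool) (C : clause V) :=
  forall l, l \in C -> a l.1 = Some (~~ l.2).

Definition upd (a : V -> option bool) x b := fun y => if y == x then Some b else a y.

Lemma falsifies_premise a a' (A R : clause V) x b :
  a' x = Some (~~ b) -> (forall y, y != x -> a' y = a y) -> a x != Some b ->
  falsifies a ((A :\ (x, b)) :|: R) -> falsifies a' A.
Proof.
move=> a'x a'_out ax_nb falsAR [y c] yc_in /=.
have [[-> ->] // | yc_neq] := eqVneq (y, c) (x, b).
have /falsAR /= ay : (y, c) \in (A :\ (x, b)) :|: R by rewrite !inE yc_neq yc_in.
have [eyx | /a'_out -> //] := eqVneq y x.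
subst y; have [cb | ncb] := eqVneq c b; first by rewrite cb eqxx in yc_neq.
by move: ncb ax_nb; rewrite ay; case: (b); case: (c).
Qed.

Lemma falsifies_resolvent_l a a' (A B : clause V) x :
  a' x = Some false -> (forall y, y != x -> a' y = a y) -> a x != Some true ->
  falsifies a (resolvent A B x) -> falsifies a' A.
Proof. exact: (falsifies_premise (b := true)). Qed.

Lemma falsifies_resolvent_r a a' (A B : clause V) x :
  a' x = Some true -> (forall y, y != x -> a' y = a y) -> a x != Some false ->
  falsifies a (resolvent A B x) -> falsifies a' B.
Proof. by rewrite /resolvent setUC; apply: (falsifies_premise (b := false)). Qed.

End PartialAssignment.

Section TreelikeRefutation.
Variables (V : finType) (F : cnf V) (P : derivation V).
Hypothesis treeP : treelike_refutation F P.

Let N := size P.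

Definition premise (u s : 'I_N) : bool :=
  if (nth (set0, FromF V) P u).2 is Resolved i j _
  then (i == s :> nat) || (j == s :> nat) else false.

Lemma treelike_valid t : t < N -> valid_line F P t.
Proof. by case: treeP => [[_ H _] _]; apply: H. Qed.

Lemma premise_lt (u s : 'I_N) : premise u s -> s < u.
Proof.
have := treelike_valid (ltn_ord u); rewrite /valid_line /premise.
by case: (nth _ P u).2 => // i j x [? ? _ _ _] /orP[] /eqP <-.
Qed.

Lemma premise_derived (u s : 'I_N) : premise u s -> is_derived P u.
Proof. by rewrite /premise /is_derived; case: (nth _ P u).2. Qed.

Lemma connect_premise_le (a s : 'I_N) : connect premise a s -> s <= a.
Proof.
case/connectP=> p; elim: p a => [|z p IH] a /=; first by move=> _ ->.
case/andP=> /premise_lt az zp /(IH _ zp); lia.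
Qed.

Lemma connect_premise_last (a s : 'I_N) : connect premise a s -> a != s ->
  exists2 u, connect premise a u & premise u s.
Proof.
case/connectP=> p; case/lastP: p => [|q z] /=; first by move=> _ ->; rewrite eqxx.
rewrite rcons_path last_rcons => /andP[aq qz] -> _.
by exists (last a q) => //; apply/connectP; exists q.
Qed.

Lemma connect_premise_derived (a s : 'I_N) :
  connect premise a s -> is_derived P s -> is_derived P a.
Proof.
case/connectP=> [[|z p]] /=; first by move=> _ ->.
by case/andP=> /premise_derived.
Qed.

Lemma premise_user_unique (s u u' : 'I_N) :
  is_derived P s -> premise u s -> premise u' s -> u = u'.
Proof.
move=> s_der us u's; apply/eqP/negPn/negP => uu'.
have : uses P s <= 1 by case: treeP => _; apply.
rewrite /uses (bigD1 u) //= (bigD1 u') 1?eq_sym //=.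
move: us u's; rewrite /premise.
by case: (nth _ P u).2; case: (nth _ P u').2 => // ? ? _ ? ? _ /orP[] /eqP -> /orP[] /eqP ->;
  rewrite eqxx; lia.
Qed.

(* A derived line has a single user, so the premise paths into it form a chain. *)
Lemma connect_premise_total (a b s : 'I_N) :
  connect premise a s -> connect premise b s -> is_derived P s ->
  connect premise a b || connect premise b a.
Proof.
move: {2}(N - s) (leqnn (N - s)) => m; elim: m a b s => [|m IH] a b s.
  by have := ltn_ord s; lia.
move=> sm a_s b_s s_der.
have [-> | a_ns] := eqVneq a s; first by rewrite b_s orbT.
have [-> | b_ns] := eqVneq b s; first by rewrite a_s.
have [u a_u us] := connect_premise_last a_s a_ns.
have [u' b_u' u's] := connect_premise_last b_s b_ns.
rewrite -(premise_user_unique s_der us u's) in b_u'.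
apply: (IH a b u) (premise_derived us) => //.
by have := premise_lt us; have := ltn_ord u; lia.
Qed.

Definition inner_subtree (t : 'I_N) := [set s | connect premise t s & is_derived P s].

Lemma card_inner_subtree (t i j : 'I_N) x :
  (nth (set0, FromF V) P t).2 = Resolved i j x ->
  #|inner_subtree i| + #|inner_subtree j| < #|inner_subtree t|.
Proof.
move=> tE.
have t_i : premise t i by rewrite /premise tE eqxx.
have t_j : premise t j by rewrite /premise tE eqxx orbT.
have t_der : is_derived P t by rewrite /is_derived tE.
have sub : t |: (inner_subtree i :|: inner_subtree j) \subset inner_subtree t.
  apply/subsetP => s; rewrite !inE => /orP[/eqP-> | /orP[] /andP[ts ->]].
  - by rewrite connect0.
  - by rewrite (connect_trans (connect1 t_i)).
  - by rewrite (connect_trans (connect1 t_j)).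
have t_out : t \notin inner_subtree i :|: inner_subtree j.
  have := premise_lt t_i; have := premise_lt t_j.
  by rewrite !inE => ? ?; apply/negP => /orP[] /andP[/connect_premise_le ? _]; lia.
have disj : inner_subtree i :&: inner_subtree j = set0.
  apply/setP => s; rewrite !inE; apply/negP => /andP[/andP[i_s s_der] /andP[j_s _]].
  have i_der := connect_premise_derived i_s s_der.
  have j_der := connect_premise_derived j_s s_der.
  have [eij | nij] := eqVneq i j.
    subst j; have : uses P i <= 1 by case: treeP => _; apply.
    by rewrite /uses (bigD1 t) //= tE eqxx; lia.
  (* The path from one premise to the other would end with a second use of it. *)
  case/orP: (connect_premise_total i_s j_s s_der) => [ij | ji].
  - have [u i_u /(premise_user_unique j_der t_j) tu] := connect_premise_last ij nij.
    by move: (connect_premise_le i_u); rewrite -tu leqNgt (premise_lt t_i).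
  - rewrite eq_sym in nij.
    have [u j_u /(premise_user_unique i_der t_i) tu] := connect_premise_last ji nij.
    by move: (connect_premise_le j_u); rewrite -tu leqNgt (premise_lt t_j).
have := subset_leq_card sub.
by rewrite cardsU1 (negbTE t_out) cardsU disj cards0 subn0.
Qed.

Variable w : (V -> option bool) -> nat.
Hypothesis w_split : forall a x, a x = None -> w a <= w (upd a x false) + w (upd a x true).
Hypothesis w_leaf : forall a C, F C -> falsifies a C -> w a <= 1.

Lemma measure_le_inner_subtree t (tN : t < N) a :
  falsifies a (line_clause P t) -> w a <= #|inner_subtree (Ordinal tN)|.+1.
Proof.
elim/ltn_ind: t tN a => t IH tN a falst.
have := treelike_valid tN; rewrite /valid_line.
case tE: (nth _ P t).2 => [|i j x]; first by move=> /w_leaf /(_ falst) /leq_trans ->.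
case=> it jt _ _ tres; rewrite tres in falst.
have iN : i < N by apply: ltn_trans it tN.
have jN : j < N by apply: ltn_trans jt tN.
have := card_inner_subtree (t := Ordinal tN) (i := Ordinal iN) (j := Ordinal jN) tE.
have same y : y != x -> a y = a y by [].
have upd_out b y : y != x -> upd a x b y = a y by rewrite /upd => /negbTE ->.
have upd_x b : upd a x b x = Some b by rewrite /upd eqxx.
case ax: (a x) => [[]|].
- have ax_nf : a x != Some false by rewrite ax.
  by have := IH j jt jN a (falsifies_resolvent_r ax same ax_nf falst); lia.
- have ax_nt : a x != Some true by rewrite ax.
  by have := IH i it iN a (falsifies_resolvent_l ax same ax_nt falst); lia.
- have ax_nf : a x != Some false by rewrite ax.
  have ax_nt : a x != Some true by rewrite ax.
  have := IH i it iN _ (falsifies_resolvent_l (upd_x false) (upd_out false) ax_nt falst).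
  have := IH j jt jN _ (falsifies_resolvent_r (upd_x true) (upd_out true) ax_nf falst).
  by have := w_split ax; lia.
Qed.

Lemma treelike_refutation_size : w (fun _ => None) <= (size P).+1.
Proof.
case: treeP => [[N_gt0 _ last_empty] _].
have lastN : N.-1 < N by rewrite prednK.
have fals_root : falsifies (fun _ => None) (line_clause P N.-1).
  by rewrite last_empty => l; rewrite inE.
apply: leq_trans (measure_le_inner_subtree lastN fals_root) _.
by have := max_card (mem (inner_subtree (Ordinal lastN))); rewrite card_ord.
Qed.

End TreelikeRefutation.

Section HomogeneousSets.
Variables (n : nat) (e : rel 'I_n).
Hypothesis e_sym : symmetric e.

Definition homogeneous (b : bool) (X : {set 'I_n}) :=
  [forall u in X, forall v in X, (u != v) ==> (e u v == b)].

Definition nhom b (S : {set 'I_n}) :=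
  #|[set X : {set 'I_n} | (X \subset S) && homogeneous b X]|.

Lemma nhomS b (S S' : {set 'I_n}) : S \subset S' -> nhom b S <= nhom b S'.
Proof.
move=> SS'; apply: subset_leq_card; apply/subsetP => X; rewrite !inE.
by case/andP=> XS ->; rewrite (subset_trans XS SS').
Qed.

Lemma nhom_gt0 b (S : {set 'I_n}) : 0 < nhom b S.
Proof.
rewrite card_gt0; apply/set0Pn; exists set0; rewrite inE sub0set /=.
by apply/forallP => u; rewrite inE.
Qed.

Definition nbhd (S : {set 'I_n}) v b := (S :\ v) :&: [set u | e v u == b].

Lemma homogeneous_setU1 b v (X : {set 'I_n}) :
  homogeneous b X -> {in X, forall u, e v u = b} -> homogeneous b (v |: X).
Proof.
move=> /forallP homX vX; apply/forallP => u; apply/implyP; rewrite !inE.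
move=> u_in; apply/forallP => u'; apply/implyP; rewrite !inE => u'_in.
apply/implyP => uu'; case/orP: u_in => [/eqP eu | uX]; case/orP: u'_in => [/eqP eu' | u'X].
- by rewrite eu eu' eqxx in uu'.
- by rewrite eu vX.
- by rewrite eu' e_sym vX.
- by move/implyP: (homX u) => /(_ uX) /forallP /(_ u') /implyP /(_ u'X) /implyP; apply.
Qed.

(* Split the b-homogeneous subsets of S according to whether they contain v. *)
Lemma nhom_setD1_nbhd b (S : {set 'I_n}) v :
  v \in S -> nhom b (S :\ v) + nhom b (nbhd S v b) <= nhom b S.
Proof.
move=> vS.
set F1 := [set X : {set 'I_n} | (X \subset S :\ v) && homogeneous b X].
set F2 := [set X : {set 'I_n} | (X \subset nbhd S v b) && homogeneous b X].
have v_out X : X \in F2 -> v \notin X.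
  by rewrite inE => /andP[/subsetP XN _]; apply/negP => /XN; rewrite !inE eqxx.
have inj : {in F2 &, injective (fun X => v |: X)}.
  move=> X Y /v_out vX /v_out vY /setP XY; apply/setP => u.
  have [-> | uv] := eqVneq u v; first by rewrite (negbTE vX) (negbTE vY).
  by move: (XY u); rewrite !inE (negbTE uv).
have disj : [disjoint F1 & [set v |: X | X in F2]].
  apply/pred0P => Z /=; apply/negP => /andP[]; rewrite inE => /andP[/subsetP ZS _].
  by case/imsetP => X _ ZE; move: (ZS v); rewrite ZE !inE eqxx => /(_ isT).
have sub : F1 :|: [set v |: X | X in F2] \subset
    [set X : {set 'I_n} | (X \subset S) && homogeneous b X].
  apply/subsetP => Z; rewrite in_setU => /orP[].
    by rewrite !inE => /andP[/subset_trans -> //]; apply: subsetDl.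
  case/imsetP => X; rewrite !inE => /andP[XN homX] ->.
  have XS : X \subset S by apply: subset_trans XN (subset_trans (subsetIl _ _) (subsetDl _ _)).
  rewrite subUset sub1set vS XS homogeneous_setU1 // => u /(subsetP XN).
  by rewrite !inE => /andP[_ /eqP].
have := subset_leq_card sub.
by rewrite cardsU (disjoint_setI0 disj) cards0 subn0 card_in_imset.
Qed.

Definition nhom2 (S : {set 'I_n}) := nhom true S * nhom false S.

Lemma nhom2_step (S : {set 'I_n}) v : v \in S -> exists T : {set 'I_n},
  #|S| <= (2 * #|T|).+1 /\ nhom2 (S :\ v) + nhom2 T <= nhom2 S.
Proof.
move=> vS.
have card_nbhd : #|nbhd S v true| + #|nbhd S v false| = #|S :\ v|.
  rewrite -(cardsID [set u | e v u] (S :\ v)); congr (_ + _); apply: eq_card => u.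
    by rewrite !inE eqb_id.
  by rewrite !inE eqbF_neg andbC.
have cardS : #|S| = (#|S :\ v|).+1 by rewrite (cardsD1 v S) vS.
have split1 := nhom_setD1_nbhd true vS; have split0 := nhom_setD1_nbhd false vS.
have nhomD b := nhomS b (subD1set S v).
have [le01 | lt10] := leqP #|nbhd S v false| #|nbhd S v true|.
- exists (nbhd S v true); split; first lia.
  have := nhomS false (subsetIl _ _ : nbhd S v true \subset S :\ v).
  have := nhomD false; rewrite /nhom2; nia.
- exists (nbhd S v false); split; first lia.
  have := nhomS true (subsetIl _ _ : nbhd S v false \subset S :\ v).
  have := nhomD true; rewrite /nhom2; nia.
Qed.

Lemma nhom2_iter s A :
  (forall T : {set 'I_n}, s <= #|T| -> A <= nhom2 T) ->
  forall r (S : {set 'I_n}), 2 * s + 1 + r <= #|S| -> (r + 1) * A <= nhom2 S.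
Proof.
move=> large; elim=> [|r IH] S cardS; have /set0Pn [v vS] : S != set0.
- by rewrite -card_gt0; lia.
- have [T [TS le]] := nhom2_step vS; have := large T (ltac:(lia)); lia.
- by rewrite -card_gt0; lia.
- have [T [TS le]] := nhom2_step vS.
  have cardSD : #|S| = (#|S :\ v|).+1 by rewrite (cardsD1 v S) vS.
  have := large T (ltac:(lia)); have := IH (S :\ v) (ltac:(lia)); lia.
Qed.

Lemma nhom2_ge j (S : {set 'I_n}) : 4 ^ j <= #|S| -> 2 ^ (j * j) <= nhom2 S.
Proof.
elim: j S => [|j IH] S cardS.
  by have := nhom_gt0 true S; have := nhom_gt0 false S; rewrite /nhom2; nia.
have pos : 0 < 4 ^ j by rewrite expn_gt0.
have -> : 2 ^ (j.+1 * j.+1) = (2 * 4 ^ j - 1 + 1) * 2 ^ (j * j).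
  rewrite subnK ?muln_gt0 // (_ : 4 = 2 ^ 2) // -expnM -[2 * _]expnS -expnD.
  by congr (2 ^ _); lia.
by apply: (nhom2_iter IH); rewrite expnS in cardS; lia.
Qed.

Lemma exists_many_homogeneous j : 4 ^ j <= n ->
  exists b, 2 ^ (j * j)./2 <= nhom b [set: 'I_n].
Proof.
move=> jn; have := @nhom2_ge j [set: 'I_n]; rewrite cardsT card_ord => /(_ jn).
rewrite /nhom2.
have [lt_t | ?] := ltnP (nhom true setT) (2 ^ (j * j)./2); last by exists true.
have [lt_f | ?] := ltnP (nhom false setT) (2 ^ (j * j)./2); last by exists false.
have : nhom true setT * nhom false setT < 2 ^ (j * j)./2 * 2 ^ (j * j)./2.
  exact: ltn_mul.
rewrite -expnD => lt_prod le_prod; exfalso.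
have : 2 ^ ((j * j)./2 + (j * j)./2) <= 2 ^ (j * j).
  by rewrite leq_exp2l // addnn -{2}(odd_double_half (j * j)) leq_addl.
lia.
Qed.

End HomogeneousSets.

Section Delayer.
Variables (n k : nat) (e : rel 'I_n) (tau : bool).

Local Notation V := (pvar k n).

Definition consistent (X : {set 'I_n}) (a : V -> option bool) :=
  [/\ a None <> Some (~~ tau),
    forall x, a (Some x) = Some true -> x.2 \in X,
    forall x y, a (Some x) = Some true -> a (Some y) = Some true ->
       (x.1 == y.1) = (x.2 == y.2) &
    forall x, x.2 \in X -> a (Some x) = Some false ->
       exists y, a (Some y) = Some true /\ ((y.1 == x.1) || (y.2 == x.2))].

Definition consistentb (X : {set 'I_n}) (a : V -> option bool) :=
  [&& a None != Some (~~ tau),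
    [forall x, (a (Some x) == Some true) ==> (x.2 \in X)],
    [forall x, forall y, (a (Some x) == Some true) && (a (Some y) == Some true) ==>
       ((x.1 == y.1) == (x.2 == y.2))] &
    [forall x, (x.2 \in X) && (a (Some x) == Some false) ==>
       [exists y, (a (Some y) == Some true) && ((y.1 == x.1) || (y.2 == x.2))]]].

Lemma consistentP X a : reflect (consistent X a) (consistentb X a).
Proof.
apply: (iffP idP).
  case/and4P=> /eqP y_ok /forallP in_X /forallP match_ /forallP covered; split => //.
  - by move=> x ax; move/implyP: (in_X x); apply; apply/eqP.
  - move=> x y ax ay; move/forallP/(_ y)/implyP: (match_ x); rewrite ax ay eqxx.
    by move=> /(_ isT) /eqP.
  - move=> x xX ax; move/implyP: (covered x); rewrite xX ax eqxx => /(_ isT).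
    by case/existsP => y /andP[/eqP ay yx]; exists y.
case=> y_ok in_X match_ covered; apply/and4P; split.
- exact/eqP.
- by apply/forallP => x; apply/implyP => /eqP /in_X.
- apply/forallP => x; apply/forallP => y; apply/implyP => /andP[/eqP ax /eqP ay].
  by rewrite (match_ _ _ ax ay).
- apply/forallP => x; apply/implyP => /andP[xX /eqP ax].
  by have [y [ay yx]] := covered x xX ax; apply/existsP; exists y; rewrite ay eqxx.
Qed.

Definition ncons (a : V -> option bool) :=
  #|[set X : {set 'I_n} | homogeneous e tau X && consistentb X a]|.

Lemma ncons_root : ncons (fun _ => None) = nhom e tau [set: 'I_n].
Proof.
apply: eq_card => X; rewrite !inE subsetT /=.
by case: (homogeneous e tau X) => //=; apply/consistentP; split; case: tau.
Qed.

Lemma upd_some (a : V -> option bool) z b w :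
  upd a (Some z) b (Some w) = if w == z then Some b else a (Some w).
Proof. by rewrite /upd (inj_eq (@Some_inj _)). Qed.

Lemma consistent_upd_false X a z : a (Some z) = None -> consistent X a ->
  (z.2 \in X -> exists y, a (Some y) = Some true /\ ((y.1 == z.1) || (y.2 == z.2))) ->
  consistent X (upd a (Some z) false).
Proof.
move=> az [y_ok in_X match_ covered] z_cov.
have true_ne_z y : a (Some y) = Some true -> y != z by apply: contraPneq => ->; rewrite az.
split => //.
- by move=> x; rewrite upd_some; case: (x == z) => //; apply: in_X.
- by move=> x y; rewrite !upd_some; case: (x == z); case: (y == z) => //; apply: match_.
- move=> x xX; rewrite upd_some.
  have [exz _ | xz /(covered x xX) [y [ay yx]]] := eqVneq x z.
  + subst x; have [y [ay yz]] := z_cov xX.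
    by exists y; rewrite upd_some (negbTE (true_ne_z _ ay)).
  + by exists y; rewrite upd_some (negbTE (true_ne_z _ ay)).
Qed.

Lemma consistent_upd_true X a z : a (Some z) = None -> consistent X a -> z.2 \in X ->
  (forall y, a (Some y) = Some true -> (y.1 != z.1) && (y.2 != z.2)) ->
  consistent X (upd a (Some z) true).
Proof.
move=> az [y_ok in_X match_ covered] zX z_free.
split => //.
- by move=> x; rewrite upd_some; case: (eqVneq x z) => [-> //|_]; apply: in_X.
- move=> x y; rewrite !upd_some.
  case: (eqVneq x z) => [->|_]; case: (eqVneq y z) => [->|_]; last exact: match_.
  + by rewrite !eqxx.
  + by move=> _ /z_free /andP[/negbTE y1 /negbTE y2]; rewrite eq_sym y1 eq_sym y2.
  + by move=> /z_free /andP[/negbTE x1 /negbTE x2]; rewrite x1 x2.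
- move=> x xX; rewrite upd_some; case: (eqVneq x z) => // xz ax.
  have [y [ay yx]] := covered x xX ax; exists y; rewrite upd_some.
  by case: (eqVneq y z) => [yz|//]; rewrite yz az in ay.
Qed.

Lemma consistent_upd X a x : a x = None -> consistent X a ->
  consistent X (upd a x false) \/ consistent X (upd a x true).
Proof.
case: x => [z|] ax consX; last first.
  have : consistent X (upd a None tau) by case: consX; split => //; case: tau.
  by case: tau; [right|left].
have [z_cov | z_free] :=
  boolP ((z.2 \notin X) || [exists y, (a (Some y) == Some true) && ((y.1 == z.1) || (y.2 == z.2))]).
  left; apply: consistent_upd_false => // zX; move: z_cov; rewrite zX /=.
  by case/existsP => y /andP[/eqP ay yz]; exists y.
right; move: z_free; rewrite negb_or negbK => /andP[zX /existsPn z_free].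
apply: consistent_upd_true => // y ay; move: (z_free y); rewrite ay eqxx /=.
by rewrite negb_or.
Qed.

Lemma ncons_split a x : a x = None ->
  ncons a <= ncons (upd a x false) + ncons (upd a x true).
Proof.
move=> ax; apply: leq_trans (leq_card_setU _ _); apply: subset_leq_card.
apply/subsetP => X; rewrite !inE => /andP[-> /consistentP consX] /=.
by case: (consistent_upd ax consX) => /consistentP ->; rewrite ?orbT.
Qed.

Lemma ncons_eq0 a : (forall X, homogeneous e tau X -> ~ consistent X a) -> ncons a = 0.
Proof.
move=> incons; apply: eq_card0 => X; rewrite !inE.
by apply/negP => /andP[homX /consistentP]; apply: incons homX.
Qed.

Lemma consistent_edge X a x y : homogeneous e tau X -> consistent X a ->
  a (Some x) = Some true -> a (Some y) = Some true -> x.2 != y.2 -> e x.2 y.2 = tau.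
Proof.
move=> /forallP homX [_ in_X _ _] /in_X xX /in_X yX xy.
by move/implyP: (homX x.2) => /(_ xX) /forallP /(_ y.2) /implyP /(_ yX) /implyP /(_ xy) /eqP.
Qed.

Lemma ncons_le1_row a (i : 'I_k) : (forall v, a (Some (i, v)) = Some false) -> ncons a <= 1.
Proof.
move=> row_false.
set matched := [set v | [exists y : 'I_k * 'I_n, (a (Some y) == Some true) && (y.2 == v)]].
rewrite -(cards1 matched); apply: subset_leq_card; apply/subsetP => X.
rewrite !inE => /andP[_ /consistentP [_ in_X _ covered]]; apply/eqP/setP => v.
rewrite inE; apply/idP/existsP => [vX | [y /andP[/eqP ay /eqP <-]]]; last exact: in_X.
have [y [ay /orP[/eqP yi | yv]]] := covered (i, v) vX (row_false v); last first.
  by exists y; rewrite ay eqxx.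
by move: ay; rewrite [y]surjective_pairing yi row_false.
Qed.

Lemma ncons_leaf a C : Psi' e C -> falsifies a C -> ncons a <= 1.
Proof.
case=> [[i ->] | [[i [u [v [uv ->]]]] | [[v [i [j [ij ->]]]] |
        [[u [v [i [j [[uv euv ij] ->]]]]] | [u [v [i [j [[uv euv ij] ->]]]]]]]]] fals.
- by apply: ncons_le1_row => v; apply: (fals (Some (i, v), true)); apply/imsetP; exists v.
- have ai : a (Some (i, u)) = Some true by apply: (fals (_, false)); rewrite !inE eqxx.
  have aj : a (Some (i, v)) = Some true by apply: (fals (_, false)); rewrite !inE eqxx orbT.
  rewrite ncons_eq0 // => X _ [_ _ match_ _].
  by move: (match_ _ _ ai aj); rewrite eqxx (negbTE uv).
- have ai : a (Some (i, v)) = Some true by apply: (fals (_, false)); rewrite !inE eqxx.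
  have aj : a (Some (j, v)) = Some true by apply: (fals (_, false)); rewrite !inE eqxx orbT.
  rewrite ncons_eq0 // => X _ [_ _ match_ _].
  by move: (match_ _ _ ai aj); rewrite eqxx (negbTE ij).
- have ay : a None = Some false by apply: (fals (_, true)); rewrite !inE eqxx.
  have ai : a (Some (i, u)) = Some true by apply: (fals (_, false)); rewrite !inE eqxx orbT.
  have aj : a (Some (j, v)) = Some true by apply: (fals (_, false)); rewrite !inE eqxx !orbT.
  rewrite ncons_eq0 // => X homX consX; have [y_ok _ _ _] := consX.
  have /= := consistent_edge homX consX ai aj uv.
  by move: y_ok; rewrite ay; case: tau => // _ euvF; rewrite euvF in euv.
- have ay : a None = Some true by apply: (fals (_, false)); rewrite !inE eqxx.
  have ai : a (Some (i, u)) = Some true by apply: (fals (_, false)); rewrite !inE eqxx orbT.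
  have aj : a (Some (j, v)) = Some true by apply: (fals (_, false)); rewrite !inE eqxx !orbT.
  rewrite ncons_eq0 // => X homX consX; have [y_ok _ _ _] := consX.
  have /= := consistent_edge homX consX ai aj uv.
  by move: y_ok; rewrite ay; case: tau => // _ euvT; rewrite euvT in euv.
Qed.

End Delayer.

Lemma sq_succ_le_half_sq j : 3 <= j -> j.+1 * j.+1 <= 8 * ((j * j)./2).-1.
Proof. by move=> j3; have := odd_double_half (j * j); rewrite -!muln2; nia. Qed.

Section Estimates.
Local Open Scope R_scope.

Lemma INR_expn2 p : INR (2 ^ p) = 2 ^ p.
Proof. by elim: p => [|p IH] //; rewrite expnS mult_INR IH /=; lra. Qed.

Lemma log2R_bounds (n j : nat) : (0 < n)%N -> (n < 4 ^ j)%N ->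
  0 <= log2R (INR n) < 2 * INR j.
Proof.
move=> n_gt0 n_lt.
have ln2_gt0 : 0 < ln 2 by have := ln_lt_2; lra.
have n_ge1 : 1 <= INR n by apply: (le_INR 1); apply/leP.
have ln_n_ge0 : 0 <= ln (INR n).
  case: (Rle_lt_or_eq_dec _ _ n_ge1) => [n_gt1 | <-]; last by rewrite ln_1; lra.
  by rewrite -ln_1; apply/Rlt_le/ln_increasing; lra.
have ln_n_lt : ln (INR n) < INR (2 * j) * ln 2.
  rewrite -ln_pow; last lra.
  apply: ln_increasing; first lra.
  by rewrite -INR_expn2 expnM; apply: lt_INR; apply/ltP.
rewrite mult_INR (_ : INR 2 = 2) in ln_n_lt; last by simpl; lra.
rewrite /log2R (_ : ln (INR 2) = ln 2) //.
have -> : ln (INR n) / ln 2 = ln (INR n) * / ln 2 by [].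
have := Rinv_0_lt_compat _ ln2_gt0; have := Rinv_r (ln 2) (Rgt_not_eq _ _ ln2_gt0).
split; nra.
Qed.

Lemma Rpower_mul_log2R (x y : R) : 0 < x ->
  Rpower x (y * log2R x) = Rpower 2 (y * log2R x * log2R x).
Proof.
move=> x_gt0; have ln2_gt0 : 0 < ln 2 by have := ln_lt_2; lra.
rewrite /Rpower /log2R (_ : ln (INR 2) = ln 2) //; congr exp; field; lra.
Qed.

(* [n^(log2 n / 32)] is [2^(log2(n)^2 / 32)] and [log2 n < 2 (j + 1)]. *)
Lemma Rpower_log2R_le (n j m : nat) : (0 < n)%N -> (n < 4 ^ j.+1)%N ->
  (j.+1 * j.+1 <= 8 * m)%N -> Rpower (INR n) (/ 32 * log2R (INR n)) <= INR (2 ^ m).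
Proof.
move=> n_gt0 n_lt jm.
have [L_ge0 L_lt] := log2R_bounds n_gt0 n_lt.
have {}jm : INR j.+1 * INR j.+1 <= 8 * INR m.
  by rewrite -mult_INR (_ : 8 = INR 8); [rewrite -mult_INR; apply/le_INR/leP | simpl; lra].
rewrite Rpower_mul_log2R; last by apply: lt_0_INR; apply/ltP.
rewrite INR_expn2 -Rpower_pow; last lra.
apply: Rle_Rpower; first lra.
set L := log2R (INR n) in L_ge0 L_lt *; nra.
Qed.

End Estimates.

Theorem mainTheorem3 :
  forall c : R, Rlt R0 c ->
  exists eps : R, Rlt R0 eps /\
  exists N : nat, forall n : nat, (N <= n)%N ->
  forall e : rel 'I_n, symmetric e -> irreflexive e ->
  forall k : nat, INR k = Rmult c (log2R (INR n)) ->
  ramsey e k ->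
  forall P : derivation (pvar k n),
  treelike_refutation (Psi' e) P ->
  Rle (Rpower (INR n) (Rmult eps (log2R (INR n)))) (INR (size P)).
Proof.
move=> c _; exists (Rinv (IZR 32)); split; first lra.
exists 64 => n n_ge e e_sym _ k _ _ P treeP.
set j := trunc_log 4 n.
have j_le : 4 ^ j <= n by apply: trunc_logP; lia.
have n_lt : n < 4 ^ j.+1 by apply: trunc_log_ltn.
have j_ge3 : 3 <= j by apply: trunc_log_max.
have := sq_succ_le_half_sq j_ge3.
have [b] := exists_many_homogeneous e_sym j_le.
move: (j * j)./2 => m many jm.
have := treelike_refutation_size treeP (@ncons_split n k e b) (@ncons_leaf n k e b).
rewrite ncons_root => size_ge.
have size_ge' : 2 ^ m.-1 <= size P.
  have m_gt0 : 0 < m by lia.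
  have : 2 ^ m = 2 * 2 ^ m.-1 by rewrite -expnS prednK.
  by have := expn_gt0 2 m.-1; lia.
apply: Rle_trans (Rpower_log2R_le _ n_lt jm) _; first lia.
by apply/le_INR/leP.
Qed.
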